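(* Let $M$ be a $d$-disk system and let $\lambda,\lambda'\ge0$ satisfy $\sqrt{2d/(d+1)}\,\lambda'\le\lambda$. Then $$\mathcal{VR}_M(\lambda')\subseteq\mathscr C_M(\lambda)\subseteq\mathcal{VR}_M(\lambda).$$
   Context: A $d$-disk system is a finite collection $M=\{D(c_i;r_i)\}_{i=1}^m$ of closed Euclidean balls in $\mathbb R^d$ with $r_i>0$. For $\lambda\ge0$: $\mathscr C_M(\lambda)$ is the set of nonempty subsets $\sigma\subseteq M$ such that $\bigcap_{D(c_i;r_i)\in\sigma}D(c_i;\lambda r_i)\ne\emptyset$ (generalized Čech complex at scale $\lambda$), and $\mathcal{VR}_M(\lambda)$ is the set of nonempty subsets $\sigma\subseteq M$ such that $D(c_i;\lambda r_i)\cap D(c_j;\lambda r_j)\neq\emptyset$ for all $D(c_i;r_i),D(c_j;r_j)\in\sigma$ (generalized Vietoris–Rips complex at scale $\lambda$). *)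

From Stdlib Require Import Reals List.
Open Scope R_scope.

(* A point of R^d is represented by a function nat -> R; only the
   coordinates 0, ..., d-1 are relevant (the others are ignored). *)
Definition point := nat -> R.

Definition edist (d : nat) (x y : point) : R :=
  sqrt (fold_right Rplus 0 (map (fun k => (x k - y k) ^ 2) (seq 0 d))).

Definition in_ball (d : nat) (c : point) (rho : R) (x : point) : Prop :=
  edist d x c <= rho.

(* A d-disk system M = {D(c i; r i)}_{i < m}: indices 0..m-1, all r i > 0. *)
Definition disk_system (m : nat) (r : nat -> R) : Prop :=
  forall i, (i < m)%nat -> 0 < r i.

Definition nonempty_subset (m : nat) (sigma : nat -> Prop) : Prop :=
  (forall i, sigma i -> (i < m)%nat) /\ (exists i, sigma i).

Definition Cech (d m : nat) (c : nat -> point) (r : nat -> R) (lam : R)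
  (sigma : nat -> Prop) : Prop :=
  nonempty_subset m sigma /\
  exists x : point, forall i, sigma i -> in_ball d (c i) (lam * r i) x.

Definition VR (d m : nat) (c : nat -> point) (r : nat -> R) (lam : R)
  (sigma : nat -> Prop) : Prop :=
  nonempty_subset m sigma /\
  forall i j, sigma i -> sigma j ->
    exists x : point, in_ball d (c i) (lam * r i) x /\ in_ball d (c j) (lam * r j) x.

(* Maximize over probability weights [a] on the disks the ratio
     h(a) = (sum_p a_p |c_p|^2 - |sum_p a_p c_p|^2) / sum_p a_p r_p^2
   of the weighted variance of the centres to the weighted mean squared radius; the
   simplex is compact, so a maximizer exists.  Moving weight towards a vertex shows that
   the barycenter x of a maximizer lies in every ball D(c_p; sqrt h * r_p), on the
   boundary when a_p > 0.  By Caratheodory at most d + 1 of these tight centres balance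
   around x with positive weights, and summing |c_p - c_q|^2 <= lam'^2 (r_p + r_q)^2 over
   their pairs against these weights yields h <= lam'^2 * 2d / (d + 1). *)

From Pilot Require Import Defs.
From Stdlib Require Import Reals Lra Lia Psatz List Arith Classical ClassicalEpsilon.
From HB Require structures.
From mathcomp Require all_boot all_order all_algebra all_classical all_reals all_analysis.
From mathcomp Require Rstruct Rstruct_topology.
Open Scope R_scope.

Definition sumL (l : list nat) (f : nat -> R) : R :=
  fold_right (fun p acc => f p + acc) 0 l.

Lemma sumL_cons a l f : sumL (a :: l) f = f a + sumL l f.
Proof. reflexivity. Qed.

Lemma sumL_ext l f g : (forall p, In p l -> f p = g p) -> sumL l f = sumL l g.
Proof.
  induction l as [|a l IH]; intros H; [reflexivity|].
  rewrite !sumL_cons, (H a (or_introl eq_refl)), IH; [reflexivity|].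
  intros p Hp; apply H; right; exact Hp.
Qed.

Lemma sumL_plus l f g : sumL l (fun p => f p + g p) = sumL l f + sumL l g.
Proof. induction l; simpl; [lra|]. rewrite IHl; lra. Qed.

Lemma sumL_minus l f g : sumL l (fun p => f p - g p) = sumL l f - sumL l g.
Proof. induction l; simpl; [lra|]. rewrite IHl; lra. Qed.

Lemma sumL_scal l c f : sumL l (fun p => c * f p) = c * sumL l f.
Proof. induction l; simpl; [lra|]. rewrite IHl; lra. Qed.

Lemma sumL_scalr l c f : sumL l (fun p => f p * c) = sumL l f * c.
Proof. induction l; simpl; [lra|]. rewrite IHl; lra. Qed.

Lemma sumL_const l c : sumL l (fun _ => c) = INR (length l) * c.
Proof. induction l; simpl length; [simpl; lra|]. rewrite sumL_cons, IHl, S_INR; lra. Qed.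

Lemma sumL_zero l : sumL l (fun _ => 0) = 0.
Proof. rewrite sumL_const; ring. Qed.

Lemma sumL_le l f g : (forall p, In p l -> f p <= g p) -> sumL l f <= sumL l g.
Proof.
  induction l as [|a l IH]; intros H; simpl; [lra|].
  apply Rplus_le_compat; [apply H; left; reflexivity|].
  apply IH; intros p Hp; apply H; right; exact Hp.
Qed.

Lemma sumL_nonneg l f : (forall p, In p l -> 0 <= f p) -> 0 <= sumL l f.
Proof. intros H. rewrite <- (sumL_zero l). apply sumL_le. exact H. Qed.

Lemma sumL_pos l f : l <> nil -> (forall p, In p l -> 0 < f p) -> 0 < sumL l f.
Proof.
  destruct l as [|a l]; intros Hn H; [congruence|].
  rewrite sumL_cons. rewrite <- (Rplus_0_r 0).
  apply Rplus_lt_le_compat; [apply H; left; reflexivity|].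
  apply sumL_nonneg; intros p Hp; left; apply H; right; exact Hp.
Qed.

Lemma sumL_nonneg_eq0 l f : (forall p, In p l -> 0 <= f p) -> sumL l f = 0 ->
  forall p, In p l -> f p = 0.
Proof.
  induction l as [|a l IH]; intros H Hs p Hp; [destruct Hp|].
  rewrite sumL_cons in Hs.
  assert (0 <= f a) by (apply H; left; reflexivity).
  assert (0 <= sumL l f) by (apply sumL_nonneg; intros; apply H; right; assumption).
  destruct Hp as [<-|Hp]; [lra|].
  apply IH; [intros; apply H; right; assumption | lra | exact Hp].
Qed.

Lemma sumL_swap l m f :
  sumL l (fun p => sumL m (fun q => f p q)) = sumL m (fun q => sumL l (fun p => f p q)).
Proof.
  induction l as [|a l IH]; simpl.
  - symmetry; apply sumL_zero.
  - rewrite IH, <- sumL_plus. reflexivity.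
Qed.

Lemma sumL_mul l m f g :
  sumL l (fun p => sumL m (fun q => f p * g q)) = sumL l f * sumL m g.
Proof. rewrite <- sumL_scalr. apply sumL_ext. intros p _. apply sumL_scal. Qed.

Lemma sumL_remove l p f : NoDup l -> In p l ->
  sumL l f = f p + sumL (remove Nat.eq_dec p l) f.
Proof.
  induction l as [|a l IH]; intros Hnd Hp; [destruct Hp|].
  inversion Hnd; subst. rewrite sumL_cons. simpl remove.
  destruct (Nat.eq_dec p a) as [<-|ne].
  - rewrite notin_remove by assumption. reflexivity.
  - rewrite sumL_cons. destruct Hp as [e|Hp]; [congruence|].
    rewrite (IH H2 Hp). lra.
Qed.

Lemma sumL_delta l p g : NoDup l -> In p l ->
  sumL l (fun q => if Nat.eq_dec p q then g q else 0) = g p.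
Proof.
  intros Hnd Hp. rewrite (sumL_remove l p) by assumption.
  destruct (Nat.eq_dec p p) as [_|n]; [|congruence].
  rewrite (sumL_ext _ _ (fun _ => 0)), sumL_zero; [ring|].
  intros q Hq. destruct (Nat.eq_dec p q) as [<-|]; [|reflexivity].
  exfalso. exact (remove_In _ _ _ Hq).
Qed.

Lemma sumL_filter (f : nat -> bool) l g :
  sumL (filter f l) g = sumL l (fun p => if f p then g p else 0).
Proof. induction l as [|a l IH]; simpl; [reflexivity|]. destruct (f a); simpl; rewrite IH; ring. Qed.

Lemma sumL_weighted_cauchy_schwarz l g x y : (forall p, In p l -> 0 <= g p) ->
  sumL l (fun p => g p * x p * y p) ^ 2 <=
  sumL l (fun p => g p * x p ^ 2) * sumL l (fun p => g p * y p ^ 2).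
Proof.
  intros Hg.
  (* Lagrange's identity: the gap is half of a double sum of squares. *)
  assert (Hgap : 0 <= sumL l (fun p => sumL l (fun q => g p * g q * (x p * y q - x q * y p) ^ 2))).
  { apply sumL_nonneg; intros p Hp; apply sumL_nonneg; intros q Hq.
    apply Rmult_le_pos; [apply Rmult_le_pos; auto | apply pow2_ge_0]. }
  rewrite (sumL_ext _ _ (fun p => sumL l (fun q => (g p * x p ^ 2) * (g q * y q ^ 2))
      - 2 * sumL l (fun q => (g p * x p * y p) * (g q * x q * y q))
      + sumL l (fun q => (g p * y p ^ 2) * (g q * x q ^ 2)))) in Hgap.
  2:{ intros p _. rewrite <- sumL_scal, <- sumL_minus, <- sumL_plus.
      apply sumL_ext; intros; ring. }
  rewrite sumL_plus, sumL_minus, sumL_scal, !sumL_mul in Hgap. nra.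
Qed.

Lemma sumL_sq_le_weighted l g f : (forall p, In p l -> 0 <= g p) ->
  sumL l (fun p => g p * f p) ^ 2 <= sumL l g * sumL l (fun p => g p * f p ^ 2).
Proof.
  intros Hg. pose proof (sumL_weighted_cauchy_schwarz l g (fun _ => 1) f Hg) as H.
  rewrite (sumL_ext _ (fun p => g p * 1 ^ 2) g),
    (sumL_ext _ (fun p => g p * 1 * f p) (fun p => g p * f p)) in H by (intros; ring).
  exact H.
Qed.

Lemma sumL_sq_le_length l f :
  sumL l f ^ 2 <= INR (length l) * sumL l (fun p => f p ^ 2).
Proof.
  pose proof (sumL_sq_le_weighted l (fun _ => 1) f ltac:(intros; lra)) as H.
  rewrite (sumL_ext _ (fun p => 1 * f p) f), (sumL_ext _ (fun p => 1 * f p ^ 2)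
    (fun p => f p ^ 2)), sumL_const in H by (intros; ring).
  lra.
Qed.

Definition dot (d : nat) (x y : point) : R := sumL (seq 0 d) (fun k => x k * y k).
Definition sqnorm (d : nat) (x : point) : R := dot d x x.
Definition vsub (x y : point) : point := fun k => x k - y k.

Lemma edist_sqnorm d x y : edist d x y = sqrt (sqnorm d (vsub x y)).
Proof.
  unfold edist, sqnorm, dot, vsub. f_equal.
  induction (seq 0 d) as [|k l IH]; [reflexivity|].
  rewrite map_cons; cbn [fold_right]. rewrite IH, sumL_cons; ring.
Qed.

Lemma dot_ext d x y x' y' :
  (forall k, x k = x' k) -> (forall k, y k = y' k) -> dot d x y = dot d x' y'.
Proof. intros H1 H2; apply sumL_ext; intros; rewrite H1, H2; reflexivity. Qed.

Lemma sqnorm_ext d x x' : (forall k, x k = x' k) -> sqnorm d x = sqnorm d x'.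
Proof. intros; apply dot_ext; assumption. Qed.

Lemma dot_sym d a b : dot d a b = dot d b a.
Proof. apply sumL_ext; intros; ring. Qed.

Lemma sqnorm_nonneg d x : 0 <= sqnorm d x.
Proof. apply sumL_nonneg. intros; nra. Qed.

Lemma sqnorm_lincomb d al be a b :
  sqnorm d (fun k => al * a k + be * b k) =
  al ^ 2 * sqnorm d a + 2 * al * be * dot d a b + be ^ 2 * sqnorm d b.
Proof.
  unfold sqnorm, dot.
  rewrite (sumL_ext _ _ (fun k => al ^ 2 * (a k * a k) +
    (2 * al * be * (a k * b k) + be ^ 2 * (b k * b k)))) by (intros; ring).
  rewrite !sumL_plus, !sumL_scal. ring.
Qed.

Lemma sqnorm_vsub d x y : sqnorm d (vsub x y) = sqnorm d x - 2 * dot d x y + sqnorm d y.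
Proof.
  rewrite (sqnorm_ext d _ (fun k => 1 * x k + (-1) * y k)) by (intros; unfold vsub; ring).
  rewrite sqnorm_lincomb. ring.
Qed.

Lemma sqnorm_vsub_self d x : sqnorm d (vsub x x) = 0.
Proof. rewrite sqnorm_vsub. unfold sqnorm. ring. Qed.

Lemma sqnorm_vsub_sym d x y : sqnorm d (vsub x y) = sqnorm d (vsub y x).
Proof. apply sumL_ext. intros; unfold vsub; ring. Qed.

Lemma dot_cauchy_schwarz d a b : Rabs (dot d a b) <= sqrt (sqnorm d a) * sqrt (sqnorm d b).
Proof.
  pose proof (sumL_weighted_cauchy_schwarz (seq 0 d) (fun _ => 1) a b
    ltac:(intros; lra)) as H.
  unfold sqnorm, dot. rewrite <- sqrt_mult by (apply sumL_nonneg; intros; nra).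
  rewrite <- sqrt_Rsqr_abs. apply sqrt_le_1_alt.
  unfold Rsqr.
  rewrite (sumL_ext _ _ (fun k => 1 * a k * b k)), (sumL_ext _ (fun k => a k * a k)
    (fun k => 1 * a k ^ 2)), (sumL_ext _ (fun k => b k * b k) (fun k => 1 * b k ^ 2))
    by (intros; ring).
  nra.
Qed.

Lemma sqnorm_vsub_le_of_balls d y a b al be :
  edist d y a <= al -> edist d y b <= be -> sqnorm d (vsub a b) <= (al + be) ^ 2.
Proof.
  rewrite !edist_sqnorm. intros Ha Hb.
  rewrite (sqnorm_ext d _ (fun k => 1 * vsub y b k + (-1) * vsub y a k))
    by (intros; unfold vsub; ring).
  rewrite sqnorm_lincomb.
  pose proof (dot_cauchy_schwarz d (vsub y b) (vsub y a)) as Hc.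
  pose proof (Rle_abs (- dot d (vsub y b) (vsub y a))) as Hn. rewrite Rabs_Ropp in Hn.
  pose proof (sqrt_pos (sqnorm d (vsub y a))). pose proof (sqrt_pos (sqnorm d (vsub y b))).
  rewrite <- (sqrt_sqrt (sqnorm d (vsub y a))), <- (sqrt_sqrt (sqnorm d (vsub y b)))
    by apply sqnorm_nonneg.
  nra.
Qed.

Lemma le_of_forall_shrink x y : (forall t, 0 < t <= 1 -> (1 - t) * x <= y) -> x <= y.
Proof.
  intros H. destruct (Rle_dec x y) as [|Hxy]; [assumption|]. exfalso.
  assert (Hy : 0 <= y) by (specialize (H 1 ltac:(lra)); lra).
  specialize (H ((x - y) / (2 * x))).
  assert (Hx : 0 < x) by lra.
  assert ((1 - (x - y) / (2 * x)) * x = (x + y) / 2) by (field; lra).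
  assert (0 < (x - y) / (2 * x) <= 1).
  { split; [apply Rdiv_lt_0_compat; lra|].
    apply Rmult_le_reg_r with (2 * x); [lra|]. field_simplify; lra. }
  specialize (H ltac:(assumption)). lra.
Qed.

Definition simplex (n : nat) (a : nat -> R) : Prop :=
  (forall p, In p (seq 0 n) -> 0 <= a p) /\ sumL (seq 0 n) a = 1.

Section JungRatio.
Variables (d n : nat) (c : nat -> point) (r : nat -> R).

Definition barycenter (a : nat -> R) : point :=
  fun k => sumL (seq 0 n) (fun p => a p * c p k).

Definition inertia (a : nat -> R) : R :=
  sumL (seq 0 n) (fun p => a p * sqnorm d (c p)) - sqnorm d (barycenter a).

Definition radial_mass (a : nat -> R) : R := sumL (seq 0 n) (fun p => a p * r p ^ 2).

Definition jung_ratio (a : nat -> R) : R := inertia a / radial_mass a.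

Lemma jung_ratio_ext a b : (forall p, In p (seq 0 n) -> a p = b p) ->
  jung_ratio a = jung_ratio b.
Proof.
  intros H. unfold jung_ratio, inertia, radial_mass.
  rewrite (sqnorm_ext d (barycenter a) (barycenter b))
    by (intros k; apply sumL_ext; intros p Hp; rewrite H by exact Hp; reflexivity).
  rewrite (sumL_ext _ (fun p => a p * sqnorm d (c p)) (fun p => b p * sqnorm d (c p))),
    (sumL_ext _ (fun p => a p * r p ^ 2) (fun p => b p * r p ^ 2));
    [reflexivity | intros p Hp; rewrite H by exact Hp; reflexivity ..].
Qed.

Lemma dot_barycenter a y :
  dot d (barycenter a) y = sumL (seq 0 n) (fun p => a p * dot d (c p) y).
Proof.
  unfold dot, barycenter.
  rewrite (sumL_ext (seq 0 d) _ (fun k => sumL (seq 0 n) (fun p => a p * (c p k * y k)))).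
  2:{ intros k _. rewrite <- sumL_scalr. apply sumL_ext; intros; ring. }
  rewrite sumL_swap. apply sumL_ext. intros p _. apply sumL_scal.
Qed.

Lemma barycenter_centered a : simplex n a -> forall k,
  sumL (seq 0 n) (fun p => a p * vsub (c p) (barycenter a) k) = 0.
Proof.
  intros [_ Hs] k. unfold vsub.
  rewrite (sumL_ext _ _ (fun p => a p * c p k - a p * barycenter a k)) by (intros; ring).
  rewrite sumL_minus, sumL_scalr, Hs. unfold barycenter at 1. ring.
Qed.

Lemma inertia_spread a : simplex n a ->
  inertia a = sumL (seq 0 n) (fun p => a p * sqnorm d (vsub (c p) (barycenter a))).
Proof.
  intros [_ Hs].
  rewrite (sumL_ext _ _ (fun p => a p * sqnorm d (c p) +
    (- 2 * (a p * dot d (c p) (barycenter a)) + a p * sqnorm d (barycenter a)))).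
  2:{ intros p _. rewrite sqnorm_vsub. ring. }
  rewrite !sumL_plus, sumL_scal, sumL_scalr, Hs, <- dot_barycenter.
  unfold inertia, sqnorm. ring.
Qed.

Lemma inertia_nonneg a : simplex n a -> 0 <= inertia a.
Proof.
  intros Ha. rewrite inertia_spread by exact Ha. apply sumL_nonneg.
  intros p Hp. apply Rmult_le_pos; [exact (proj1 Ha p Hp) | apply sqnorm_nonneg].
Qed.

Hypothesis r_pos : forall p, In p (seq 0 n) -> 0 < r p.

Lemma radial_mass_pos a : simplex n a -> 0 < radial_mass a.
Proof.
  intros [Hnn Hs].
  assert (Hr2 : forall p, In p (seq 0 n) -> 0 < r p ^ 2) by (intros; apply pow_lt, r_pos; auto).
  assert (H0 : 0 <= radial_mass a).
  { apply sumL_nonneg. intros p Hp. apply Rmult_le_pos; [auto | left; auto]. }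
  destruct H0 as [|Hz]; [assumption|]. exfalso.
  assert (Ha0 : forall p, In p (seq 0 n) -> a p = 0).
  { intros p Hp.
    assert (a p * r p ^ 2 = 0).
    { apply (sumL_nonneg_eq0 (seq 0 n) (fun q => a q * r q ^ 2)); auto.
      intros q Hq. apply Rmult_le_pos; [auto | left; auto]. }
    specialize (Hr2 p Hp). nra. }
  rewrite (sumL_ext _ _ (fun _ => 0)), sumL_zero in Hs by exact Ha0. lra.
Qed.

Definition toward (a : nat -> R) (j : nat) (t : R) : nat -> R :=
  fun p => (1 - t) * a p + t * (if Nat.eq_dec j p then 1 else 0).

Section Toward.
Variables (a : nat -> R) (j : nat) (t : R).
Hypothesis Hj : In j (seq 0 n).

Lemma sumL_toward f :
  sumL (seq 0 n) (fun p => toward a j t p * f p) =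
  (1 - t) * sumL (seq 0 n) (fun p => a p * f p) + t * f j.
Proof.
  rewrite (sumL_ext _ _ (fun p => (1 - t) * (a p * f p) +
    t * (if Nat.eq_dec j p then f p else 0))).
  2:{ intros p _. unfold toward. destruct (Nat.eq_dec j p); ring. }
  rewrite sumL_plus, !sumL_scal, sumL_delta by (auto using seq_NoDup). reflexivity.
Qed.

Lemma toward_simplex : simplex n a -> 0 <= t <= 1 -> simplex n (toward a j t).
Proof.
  intros [Hnn Hs] Ht. split.
  - intros p Hp. specialize (Hnn p Hp). unfold toward. destruct (Nat.eq_dec j p); nra.
  - rewrite (sumL_ext _ _ (fun p => toward a j t p * 1)) by (intros; ring).
    rewrite sumL_toward, (sumL_ext _ _ a), Hs by (intros; ring). ring.
Qed.

Lemma barycenter_toward k :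
  barycenter (toward a j t) k = (1 - t) * barycenter a k + t * c j k.
Proof. apply sumL_toward. Qed.

Lemma inertia_toward :
  inertia (toward a j t) =
  (1 - t) * inertia a + t * (1 - t) * sqnorm d (vsub (c j) (barycenter a)).
Proof.
  unfold inertia. rewrite sumL_toward.
  rewrite (sqnorm_ext d _ _ barycenter_toward), sqnorm_lincomb, sqnorm_vsub, dot_sym.
  ring.
Qed.

Lemma radial_mass_toward : radial_mass (toward a j t) = (1 - t) * radial_mass a + t * r j ^ 2.
Proof. apply sumL_toward. Qed.

End Toward.

Section Maximizer.
Variable a : nat -> R.
Hypothesis Ha : simplex n a.
Hypothesis a_max : forall b, simplex n b -> jung_ratio b <= jung_ratio a.

(* Moving weight towards a vertex whose dilated ball misses the barycenter would
   increase the ratio. *)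
Lemma maximizer_envelope j : In j (seq 0 n) ->
  sqnorm d (vsub (c j) (barycenter a)) <= jung_ratio a * r j ^ 2.
Proof.
  intros Hj.
  set (D := sqnorm d (vsub (c j) (barycenter a))).
  assert (HP := radial_mass_pos a Ha).
  assert (HV := inertia_nonneg a Ha).
  assert (Hr : 0 < r j ^ 2) by (apply pow_lt, r_pos, Hj).
  enough (Hcross : D * radial_mass a <= inertia a * r j ^ 2).
  { unfold jung_ratio. apply (Rmult_le_reg_r (radial_mass a)); [exact HP|].
    replace (inertia a / radial_mass a * r j ^ 2 * radial_mass a)
      with (inertia a * r j ^ 2) by (field; lra). exact Hcross. }
  apply le_of_forall_shrink. intros t Ht.
  assert (Hb := toward_simplex a j t Hj Ha ltac:(lra)).
  assert (HPb := radial_mass_pos _ Hb).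
  pose proof (a_max _ Hb) as Hm. unfold jung_ratio in Hm.
  apply (Rmult_le_compat_r (radial_mass (toward a j t) * radial_mass a)) in Hm; [|nra].
  replace (inertia (toward a j t) / radial_mass (toward a j t) *
    (radial_mass (toward a j t) * radial_mass a))
    with (inertia (toward a j t) * radial_mass a) in Hm by (field; lra).
  replace (inertia a / radial_mass a * (radial_mass (toward a j t) * radial_mass a))
    with (inertia a * radial_mass (toward a j t)) in Hm by (field; lra).
  rewrite inertia_toward, radial_mass_toward in Hm by exact Hj. fold D in Hm.
  apply (Rmult_le_reg_l t); [lra|]. nra.
Qed.

(* Complementary slackness: weighted by [a], the envelope inequalities sum to an equality. *)
Lemma maximizer_active p : In p (seq 0 n) -> 0 < a p ->
  sqnorm d (vsub (c p) (barycenter a)) = jung_ratio a * r p ^ 2.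
Proof.
  intros Hp Hap.
  assert (HP := radial_mass_pos a Ha).
  assert (Hslack : sumL (seq 0 n) (fun q =>
    a q * (jung_ratio a * r q ^ 2 - sqnorm d (vsub (c q) (barycenter a)))) = 0).
  { rewrite (sumL_ext _ _ (fun q => jung_ratio a * (a q * r q ^ 2) -
      a q * sqnorm d (vsub (c q) (barycenter a)))) by (intros; ring).
    rewrite sumL_minus, sumL_scal, <- inertia_spread by exact Ha.
    unfold jung_ratio, radial_mass. field. exact (Rgt_not_eq _ _ HP). }
  assert (Hterm : a p * (jung_ratio a * r p ^ 2 - sqnorm d (vsub (c p) (barycenter a))) = 0).
  { apply (sumL_nonneg_eq0 (seq 0 n) (fun q =>
      a q * (jung_ratio a * r q ^ 2 - sqnorm d (vsub (c q) (barycenter a))))); auto.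
    intros q Hq. apply Rmult_le_pos; [exact (proj1 Ha q Hq)|].
    pose proof (maximizer_envelope q Hq). lra. }
  apply Rmult_integral in Hterm. lra.
Qed.

End Maximizer.
End JungRatio.

Lemma length_remove l p : NoDup l -> In p l ->
  length (remove Nat.eq_dec p l) = pred (length l).
Proof.
  induction l as [|a l IH]; intros Hnd Hp; [destruct Hp|].
  inversion Hnd; subst. simpl remove.
  destruct (Nat.eq_dec p a) as [<-|ne].
  - rewrite notin_remove by assumption. reflexivity.
  - destruct Hp as [e|Hp]; [congruence|]. simpl length. rewrite IH by assumption.
    destruct l; [destruct Hp|]. reflexivity.
Qed.

Lemma NoDup_remove_nat l p : NoDup l -> NoDup (remove Nat.eq_dec p l).
Proof.
  induction l as [|a l IH]; intros Hnd; simpl; [constructor|].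
  inversion Hnd; subst. destruct (Nat.eq_dec p a); [apply IH; assumption|].
  constructor; [|apply IH; assumption].
  intros Hin. apply in_remove in Hin. destruct Hin; contradiction.
Qed.

(* Gaussian elimination: eliminate the pivot [p0] of equation [m] from the others. *)
Lemma homogeneous_solution_exists (m : nat) : forall (l : list nat) (F : nat -> nat -> R),
  NoDup l -> (m < length l)%nat ->
  exists mu : nat -> R, (exists p, In p l /\ mu p <> 0) /\
    forall j, (j < m)%nat -> sumL l (fun p => mu p * F j p) = 0.
Proof.
  induction m as [|m IH]; intros l F Hnd Hlen.
  { destruct l as [|p0 l]; [simpl in Hlen; lia|].
    exists (fun _ => 1). split; [exists p0; split; [left; reflexivity | lra] | lia]. }
  destruct (classic (exists p0, In p0 l /\ F m p0 <> 0)) as [[p0 [Hp0 Hf]]|Hno].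
  - set (l' := remove Nat.eq_dec p0 l).
    set (F' := fun j p => F j p - F j p0 * F m p / F m p0).
    destruct (IH l' F' ltac:(apply NoDup_remove_nat; assumption)
      ltac:(unfold l'; rewrite length_remove by assumption; lia))
      as [mu' [[p1 [Hp1 Hmu1]] Hsum']].
    set (S0 := sumL l' (fun q => mu' q * F m q)).
    set (mu := fun p => if Nat.eq_dec p p0 then - S0 / F m p0 else mu' p).
    assert (Hmu_l' : forall g, sumL l' (fun q => mu q * g q) = sumL l' (fun q => mu' q * g q)).
    { intros g. apply sumL_ext. intros q Hq. unfold mu.
      destruct (Nat.eq_dec q p0) as [->|]; [|reflexivity].
      exfalso. exact (remove_In _ _ _ Hq). }
    exists mu. split.
    + apply in_remove in Hp1. destruct Hp1 as [Hp1 Hne].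
      exists p1. split; [exact Hp1|]. unfold mu. destruct (Nat.eq_dec p1 p0); [contradiction|exact Hmu1].
    + intros j Hj.
      rewrite (sumL_remove l p0), Hmu_l' by assumption.
      unfold mu at 1. destruct (Nat.eq_dec p0 p0) as [_|]; [|congruence].
      destruct (Nat.eq_dec j m) as [->|ne].
      { fold S0. field. exact Hf. }
      specialize (Hsum' j ltac:(lia)). unfold F' in Hsum'.
      rewrite (sumL_ext _ _ (fun q => mu' q * F j q - (F j p0 / F m p0) * (mu' q * F m q)))
        in Hsum' by (intros; field; exact Hf).
      rewrite sumL_minus, sumL_scal in Hsum'. fold S0 in Hsum'.
      replace (- S0 / F m p0 * F j p0) with (- (F j p0 / F m p0 * S0)) by (field; exact Hf).
      lra.
  - destruct (IH l F Hnd ltac:(lia)) as [mu [Hnz Hs]].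
    exists mu. split; [exact Hnz|].
    intros j Hj. destruct (Nat.eq_dec j m) as [->|ne]; [|apply Hs; lia].
    rewrite (sumL_ext _ _ (fun _ => 0)), sumL_zero; [reflexivity|].
    intros p Hp. destruct (Req_dec (F m p) 0) as [->|ne]; [ring|].
    exfalso; apply Hno; exists p; split; assumption.
Qed.

Definition balancing (d : nat) (u : nat -> point) (l : list nat) (w : nat -> R) : Prop :=
  NoDup l /\ l <> nil /\ (forall p, In p l -> 0 < w p) /\
  forall k, (k < d)%nat -> sumL l (fun p => w p * u p k) = 0.

Definition positive_part (l : list nat) (w : nat -> R) : list nat :=
  filter (fun p => if Rlt_dec 0 (w p) then true else false) l.

Lemma In_positive_part l w p : In p (positive_part l w) <-> In p l /\ 0 < w p.
Proof.
  unfold positive_part. rewrite filter_In.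
  destruct (Rlt_dec 0 (w p)); split; intros [H1 H2]; auto; congruence.
Qed.

Lemma sumL_positive_part l w f : (forall p, In p l -> 0 <= w p) ->
  sumL (positive_part l w) (fun p => w p * f p) = sumL l (fun p => w p * f p).
Proof.
  intros Hw. unfold positive_part. rewrite sumL_filter. apply sumL_ext. intros p Hp.
  destruct (Rlt_dec 0 (w p)); [reflexivity|].
  replace (w p) with 0 by (specialize (Hw p Hp); lra). ring.
Qed.

Lemma positive_part_balancing d u l w : NoDup l -> (forall p, In p l -> 0 <= w p) ->
  0 < sumL l w -> (forall k, (k < d)%nat -> sumL l (fun p => w p * u p k) = 0) ->
  balancing d u (positive_part l w) w.
Proof.
  intros Hnd Hw Hsum Hs. repeat split.
  - apply NoDup_filter, Hnd.
  - intros Hnil. pose proof (sumL_positive_part l w (fun _ => 1) Hw) as H.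
    rewrite Hnil, (sumL_ext l (fun p => w p * 1) w) in H by (intros; ring).
    simpl in H. lra.
  - intros p Hp. apply In_positive_part in Hp. apply Hp.
  - intros k Hk. rewrite sumL_positive_part by exact Hw. apply Hs, Hk.
Qed.

Lemma affine_dependence_exists d (u : nat -> point) l :
  NoDup l -> (S d < length l)%nat ->
  exists mu : nat -> R, (exists p, In p l /\ 0 < mu p) /\ sumL l mu = 0 /\
    forall k, (k < d)%nat -> sumL l (fun p => mu p * u p k) = 0.
Proof.
  intros Hnd Hlen.
  set (F := fun j p => if Nat.ltb j d then u p j else 1).
  destruct (homogeneous_solution_exists (S d) l F Hnd Hlen) as [mu0 [[p1 [Hp1 Hmu1]] Hmu]].
  set (s := if Rlt_dec 0 (mu0 p1) then 1 else -1).
  exists (fun p => s * mu0 p). repeat split.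
  - exists p1. split; [exact Hp1|]. unfold s. destruct (Rlt_dec 0 (mu0 p1)); lra.
  - specialize (Hmu d ltac:(lia)).
    rewrite (sumL_ext _ _ mu0) in Hmu by (intros; unfold F; rewrite Nat.ltb_irrefl; ring).
    rewrite sumL_scal, Hmu. ring.
  - intros k Hk. specialize (Hmu k ltac:(lia)).
    rewrite (sumL_ext _ _ (fun p => mu0 p * u p k)) in Hmu
      by (intros; unfold F; apply Nat.ltb_lt in Hk; rewrite Hk; reflexivity).
    rewrite (sumL_ext _ _ (fun p => s * (mu0 p * u p k))), sumL_scal, Hmu by (intros; ring).
    ring.
Qed.

Lemma list_argmin (P : nat -> Prop) (g : nat -> R) l :
  (exists p, In p l /\ P p) ->
  exists p0, In p0 l /\ P p0 /\ forall q, In q l -> P q -> g p0 <= g q.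
Proof.
  induction l as [|a l IH]; intros [p [Hp HP]]; [destruct Hp|].
  destruct (classic (exists p, In p l /\ P p)) as [Hex|Hnex].
  - destruct (IH Hex) as [p0 [Hp0 [HP0 Hmin]]].
    destruct (classic (P a /\ g a <= g p0)) as [[Pa Hle]|Hnot].
    + exists a. split; [left; reflexivity|]. split; [exact Pa|].
      intros q [<-|Hq] HPq; [lra|]. specialize (Hmin q Hq HPq). lra.
    + exists p0. split; [right; exact Hp0|]. split; [exact HP0|].
      intros q [<-|Hq] HPq; [|apply Hmin; assumption].
      destruct (Rle_dec (g p0) (g a)) as [|Hgt]; [assumption|].
      exfalso; apply Hnot; split; [assumption | lra].
  - destruct Hp as [<-|Hp]; [|exfalso; apply Hnex; exists p; split; assumption].
    exists a. split; [left; reflexivity|]. split; [exact HP|].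
    intros q [<-|Hq] HPq; [lra|]. exfalso; apply Hnex; exists q; split; assumption.
Qed.

Lemma filter_length_lt (f : nat -> bool) l p : In p l -> f p = false ->
  (length (filter f l) < length l)%nat.
Proof.
  induction l as [|a l IH]; intros Hp Hf; [destruct Hp|].
  pose proof (filter_length_le f l).
  simpl. destruct Hp as [<-|Hp].
  - rewrite Hf. lia.
  - destruct (f a); simpl; specialize (IH Hp Hf); lia.
Qed.

(* Subtract the largest multiple [th * mu] of an affine dependence that keeps the
   weights nonnegative; at least one weight vanishes and is dropped. *)
Lemma caratheodory_step d u l w : balancing d u l w -> (S d < length l)%nat ->
  exists l' w', incl l' l /\ (length l' < length l)%nat /\ balancing d u l' w'.
Proof.
  intros [Hnd [Hne [Hw Hs]]] Hbig.
  destruct (affine_dependence_exists d u l Hnd Hbig) as [mu [Hmu_pos [Hmu_sum Hmu_u]]].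
  destruct (list_argmin (fun p => 0 < mu p) (fun p => w p / mu p) l Hmu_pos)
    as [p0 [Hp0 [Hm0 Hmin]]].
  set (th := w p0 / mu p0).
  set (w' := fun p => w p - th * mu p).
  assert (Hw' : forall p, In p l -> 0 <= w' p).
  { intros p Hp. unfold w'. destruct (Rlt_dec 0 (mu p)) as [Hpos|Hnp].
    - specialize (Hmin p Hp Hpos). fold th in Hmin.
      apply (Rmult_le_compat_r (mu p)) in Hmin; [|lra].
      replace (w p / mu p * mu p) with (w p) in Hmin by (field; lra). lra.
    - assert (0 < th) by (apply Rdiv_lt_0_compat; auto). specialize (Hw p Hp). nra. }
  exists (positive_part l w'), w'. split; [|split].
  - intros p Hp. apply In_positive_part in Hp. apply Hp.
  - apply (filter_length_lt _ l p0 Hp0).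
    destruct (Rlt_dec 0 (w' p0)) as [Hpos|]; [|reflexivity].
    exfalso. unfold w', th in Hpos. field_simplify in Hpos; lra.
  - apply positive_part_balancing; [exact Hnd | exact Hw' | |].
    + rewrite (sumL_ext _ _ (fun p => w p - th * mu p)), sumL_minus, sumL_scal, Hmu_sum
        by (intros; unfold w'; ring).
      assert (0 < sumL l w) by (apply sumL_pos; assumption). lra.
    + intros k Hk.
      rewrite (sumL_ext _ _ (fun p => w p * u p k - th * (mu p * u p k))), sumL_minus,
        sumL_scal, Hs, Hmu_u by (auto; intros; unfold w'; ring).
      ring.
Qed.

Lemma caratheodory d u l w : balancing d u l w ->
  exists l' w', incl l' l /\ (length l' <= S d)%nat /\ balancing d u l' w'.
Proof.
  remember (length l) as N eqn:HN. revert l w HN.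
  induction N as [N IH] using lt_wf_ind. intros l w HN Hbal.
  destruct (le_lt_dec (length l) (S d)) as [Hsmall|Hbig].
  { exists l, w. split; [apply incl_refl | split; assumption]. }
  destruct (caratheodory_step d u l w Hbal Hbig) as [l1 [w1 [Hincl1 [Hlen1 Hbal1]]]].
  destruct (IH (length l1) ltac:(lia) l1 w1 eq_refl Hbal1) as [l' [w' [Hincl [Hlen Hbal']]]].
  exists l', w'. split; [exact (incl_tran Hincl Hincl1) | split; assumption].
Qed.

Lemma centered_pair_sum d u l g :
  (forall k, (k < d)%nat -> sumL l (fun p => g p * u p k) = 0) ->
  sumL l (fun p => sumL l (fun q => g p * g q * sqnorm d (vsub (u p) (u q)))) =
  2 * sumL l g * sumL l (fun p => g p * sqnorm d (u p)).
Proof.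
  intros Hs.
  assert (Hdot : sumL l (fun p => sumL l (fun q => g p * g q * dot d (u p) (u q))) = 0).
  { unfold dot.
    rewrite (sumL_ext _ _ (fun p => sumL (seq 0 d)
      (fun k => sumL l (fun q => (g p * u p k) * (g q * u q k))))).
    2:{ intros p _. rewrite sumL_swap. apply sumL_ext. intros k _.
        rewrite <- sumL_scal. apply sumL_ext. intros q _. ring. }
    rewrite sumL_swap, (sumL_ext _ _ (fun _ => 0)), sumL_zero; [reflexivity|].
    intros k Hk. apply in_seq in Hk. rewrite sumL_mul, Hs by lia. ring. }
  transitivity (sumL l (fun p => sumL l (fun q => (g p * sqnorm d (u p)) * g q)) -
    2 * sumL l (fun p => sumL l (fun q => g p * g q * dot d (u p) (u q))) +
    sumL l (fun p => sumL l (fun q => g p * (g q * sqnorm d (u q))))).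
  - rewrite <- sumL_scal, <- sumL_minus, <- sumL_plus. apply sumL_ext; intros p _.
    rewrite <- sumL_scal, <- sumL_minus, <- sumL_plus. apply sumL_ext; intros q _.
    rewrite sqnorm_vsub; ring.
  - rewrite Hdot, !sumL_mul. ring.
Qed.

Lemma pair_sum_radii l g rho :
  sumL l (fun p => sumL l (fun q => g p * g q * (rho p + rho q) ^ 2)) =
  2 * sumL l g * sumL l (fun p => g p * rho p ^ 2) + 2 * sumL l (fun p => g p * rho p) ^ 2.
Proof.
  rewrite (sumL_ext _ _ (fun p => sumL l (fun q => (g p * rho p ^ 2) * g q) +
    2 * sumL l (fun q => (g p * rho p) * (g q * rho q)) +
    sumL l (fun q => g p * (g q * rho q ^ 2)))).
  2:{ intros p _. rewrite <- sumL_scal, <- !sumL_plus. apply sumL_ext; intros; ring. }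
  rewrite !sumL_plus, sumL_scal, !sumL_mul. ring.
Qed.

Lemma pair_sum_le_radii d u l g rho L : NoDup l -> (forall p, In p l -> 0 < g p) ->
  (forall p q, In p l -> In q l -> p <> q ->
    sqnorm d (vsub (u p) (u q)) <= L ^ 2 * (rho p + rho q) ^ 2) ->
  sumL l (fun p => sumL l (fun q => g p * g q * sqnorm d (vsub (u p) (u q)))) <=
  L ^ 2 * (2 * sumL l g * sumL l (fun p => g p * rho p ^ 2) +
    2 * sumL l (fun p => g p * rho p) ^ 2) - 4 * L ^ 2 * sumL l (fun p => (g p * rho p) ^ 2).
Proof.
  intros Hnd Hg Hpair.
  (* The diagonal terms vanish on the left but not in the bound, hence the correction. *)
  apply Rle_trans with (sumL l (fun p => sumL l (fun q =>
    L ^ 2 * (g p * g q * (rho p + rho q) ^ 2) -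
    (if Nat.eq_dec p q then 4 * L ^ 2 * (g q * rho q) ^ 2 else 0)))).
  - apply sumL_le. intros p Hp. apply sumL_le. intros q Hq.
    assert (0 < g p * g q) by (apply Rmult_lt_0_compat; auto).
    assert (0 <= L ^ 2) by apply pow2_ge_0.
    destruct (Nat.eq_dec p q) as [<-|ne].
    + rewrite sqnorm_vsub_self. nra.
    + specialize (Hpair p q Hp Hq ne). nra.
  - apply Req_le.
    rewrite (sumL_ext _ _ (fun p => sumL l (fun q => L ^ 2 * (g p * g q * (rho p + rho q) ^ 2))
      - 4 * L ^ 2 * (g p * rho p) ^ 2)).
    2:{ intros p Hp. rewrite sumL_minus, sumL_delta by assumption. reflexivity. }
    rewrite sumL_minus, (sumL_ext _ _ (fun p =>
      L ^ 2 * sumL l (fun q => g p * g q * (rho p + rho q) ^ 2))) by (intros; apply sumL_scal).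
    rewrite !sumL_scal, pair_sum_radii. reflexivity.
Qed.

(* Compare the weighted sum of squared pairwise distances, which the balancing condition
   computes exactly, with its termwise upper bound; two Cauchy-Schwarz estimates, one using
   [length l <= d + 1], finish the argument. *)
Lemma balanced_sphere_bound d u l g rho T L :
  (1 <= d)%nat -> balancing d u l g -> (length l <= S d)%nat ->
  (forall p, In p l -> 0 < rho p) ->
  (forall p, In p l -> sqnorm d (u p) = T * rho p ^ 2) ->
  (forall p q, In p l -> In q l -> p <> q ->
    sqnorm d (vsub (u p) (u q)) <= L ^ 2 * (rho p + rho q) ^ 2) ->
  T <= L ^ 2 * (2 * INR d / (INR d + 1)).
Proof.
  intros Hd [Hnd [Hne [Hg Hs]]] Hlen Hrho Hu Hpair.
  set (G := sumL l g).
  set (P := sumL l (fun p => g p * rho p ^ 2)).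
  set (B := sumL l (fun p => g p * rho p)).
  set (Q := sumL l (fun p => (g p * rho p) ^ 2)).
  assert (HG : 0 < G) by (apply sumL_pos; assumption).
  assert (HP : 0 < P).
  { apply sumL_pos; [assumption|]. intros p Hp.
    apply Rmult_lt_0_compat; [auto | apply pow_lt; auto]. }
  assert (Hexact : sumL l (fun p => sumL l (fun q => g p * g q * sqnorm d (vsub (u p) (u q))))
    = 2 * G * (T * P)).
  { rewrite centered_pair_sum by exact Hs. fold G. f_equal.
    unfold P. rewrite <- sumL_scal. apply sumL_ext. intros p Hp. rewrite Hu by exact Hp. ring. }
  assert (Hupper := pair_sum_le_radii d u l g rho L Hnd Hg Hpair). fold G P B Q in Hupper.
  assert (HGP : B ^ 2 <= G * P) by (apply sumL_sq_le_weighted; intros; left; auto).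
  assert (HkQ : B ^ 2 <= (INR d + 1) * Q).
  { assert (Hk : INR (length l) <= INR d + 1) by (rewrite <- S_INR; apply le_INR, Hlen).
    assert (HQ : 0 <= Q) by (apply sumL_nonneg; intros; apply pow2_ge_0).
    pose proof (sumL_sq_le_length l (fun p => g p * rho p)) as HCS.
    cbv beta in HCS. fold B Q in HCS. nra. }
  assert (Hd1 : 1 <= INR d) by (apply (le_INR 1), Hd).
  assert (HL : 0 <= L ^ 2) by apply pow2_ge_0.
  assert (HGPT : G * P * T <= L ^ 2 * (G * P + B ^ 2 - 2 * Q)) by nra.
  assert (Hdim : (INR d + 1) * (B ^ 2 - 2 * Q) <= (INR d - 1) * (G * P)) by nra.
  assert (Hkey : (INR d + 1) * (G * P) * T <= L ^ 2 * (2 * INR d) * (G * P)) by nra.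
  apply (Rmult_le_reg_l ((INR d + 1) * (G * P))); [nra|].
  replace ((INR d + 1) * (G * P) * (L ^ 2 * (2 * INR d / (INR d + 1))))
    with (L ^ 2 * (2 * INR d) * (G * P)) by (field; lra).
  exact Hkey.
Qed.

Module SimplexMaximum.
Import structures all_boot all_order all_algebra all_classical all_reals all_analysis.
Import Rstruct Rstruct_topology.
Import Order.TTheory GRing.Theory Num.Theory.
Import numFieldNormedType.Exports.
Local Open Scope classical_set_scope.
Local Open Scope ring_scope.

Section Continuity.
Variables (T : topologicalType) (x : T).

Lemma continuous_Rplus (F G : T -> R) : {for x, continuous F} -> {for x, continuous G} ->
  {for x, continuous (fun y => Rplus (F y) (G y))}.
Proof. exact: (@continuousD R R^o T F G x). Qed.

Lemma continuous_Rmult (F G : T -> R) : {for x, continuous F} -> {for x, continuous G} ->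
  {for x, continuous (fun y => Rmult (F y) (G y))}.
Proof. exact: (@continuousM R T F G x). Qed.

Lemma continuous_Ropp (F : T -> R) : {for x, continuous F} ->
  {for x, continuous (fun y => Ropp (F y))}.
Proof. exact: (@continuousN R R^o T F x). Qed.

Lemma continuous_Rinv (F : T -> R) : F x <> 0%R -> {for x, continuous F} ->
  {for x, continuous (fun y => Rinv (F y))}.
Proof. by move=> /eqP Fx0; exact: (@continuousV R T F x). Qed.

Lemma continuous_sumL l (F : nat -> T -> R) : (forall p, {for x, continuous (F p)}) ->
  {for x, continuous (fun y => sumL l (fun p => F p y))}.
Proof.
by move=> hF; elim: l => [|p l IH] /=; [exact: cst_continuous | exact: continuous_Rplus].
Qed.

Lemma continuous_bigsum (I : Type) (l : seq I) (F : I -> T -> R) :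
  (forall i, {for x, continuous (F i)}) ->
  {for x, continuous (fun y => \sum_(i <- l) F i y)}.
Proof.
move=> hF; elim: l => [|i l IH].
  have -> : (fun y => \sum_(i <- [::]) F i y) = (fun=> 0) by apply: funext => y; rewrite big_nil.
  exact: cst_continuous.
have -> : (fun y => \sum_(j <- i :: l) F j y) = (fun y => Rplus (F i y) (\sum_(j <- l) F j y)).
  by apply: funext => y; rewrite big_cons.
exact: continuous_Rplus.
Qed.

End Continuity.

Definition std_simplex n : set 'rV[R]_n :=
  [set v | (forall i, 0 <= v ord0 i) /\ \sum_i v ord0 i = 1].

Lemma std_simplex_compact n : compact (std_simplex n).
Proof.
apply: (@subclosed_compact _ _ [set v : 'rV[R]_n | forall i, `[0, 1]%classic (v ord0 i)]).
- have -> : std_simplex n =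
      (\bigcap_(i in setT) ((fun v : 'rV[R]_n => v ord0 i) @^-1` [set x | 0 <= x]))
      `&` ((fun v : 'rV[R]_n => \sum_i v ord0 i) @^-1` [set x | x = 1]).
    apply/seteqP; split => v /= [h1 h2]; split => // i; last exact: h1.
    by move=> _; exact: h1.
  apply: closedI.
    apply: closed_bigI => i _; apply: preimage_closed; last exact: closed_ge.
    by move=> v _; exact: coord_continuous.
  apply: preimage_closed; last exact: closed_eq.
  by move=> v _; apply: continuous_bigsum => i; exact: coord_continuous.
- by apply: (@rV_compact _ n (fun=> `[(0:R), 1]%classic)) => i; exact: segment_compact.
- move=> v [h1 h2] i /=; rewrite in_itv /= h1 /=.
  by rewrite -h2 (bigD1 i) //= lerDl sumr_ge0.
Qed.

Lemma std_simplex_neq0 n : (0 < n)%N -> std_simplex n !=set0.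
Proof.
move=> n0; exists (\row_i (if val i == 0%N then 1 else 0)); split.
  by move=> i; rewrite mxE; case: ifP => _; [exact: ler01 | exact: lexx].
rewrite (bigD1 (Ordinal n0)) //= mxE /= big1 ?addr0 // => i hi; rewrite mxE.
case: ifP => // /eqP h; move: hi; suff -> : i = Ordinal n0 by rewrite eqxx.
exact: val_inj.
Qed.

Definition of_row {n} (v : 'rV[R]_n) (p : nat) : R :=
  if insub p is Some i then v ord0 i else 0.

Lemma of_row_ord n (v : 'rV[R]_n) (i : 'I_n) : of_row v i = v ord0 i.
Proof. by rewrite /of_row valK. Qed.

Lemma continuous_of_row n (v : 'rV[R]_n) p : {for v, continuous (fun w => of_row w p)}.
Proof.
rewrite /of_row; case: insub => [i|]; [exact: coord_continuous | exact: cst_continuous].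
Qed.

Lemma sumL_iota n (f : nat -> R) : sumL (List.seq 0 n) f = \sum_(i < n) f i.
Proof.
have -> : List.seq 0 n = iota 0 n by elim: n 0%N => [|n IH] s //=; rewrite IH.
rewrite -(big_mkord xpredT) /index_iota subn0.
by elim: (iota 0 n) => [|p l IH] /=; rewrite ?big_nil ?big_cons ?IH.
Qed.

Lemma In_seq_ord n p : List.In p (List.seq 0 n) -> exists i : 'I_n, p = i.
Proof.
move=> /List.in_seq [_ /= /ssrnat.ltP hp]; exists (Ordinal hp); by [].
Qed.

Lemma simplex_of_row n (v : 'rV[R]_n) : std_simplex n v -> simplex n (of_row v).
Proof.
move=> [h1 h2]; split.
  by move=> p /In_seq_ord [i ->]; rewrite of_row_ord; apply/RleP.
rewrite sumL_iota; transitivity (\sum_i v ord0 i); last exact: h2.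
by apply: eq_bigr => i _; rewrite of_row_ord.
Qed.

Lemma simplex_to_row n (a : nat -> R) : simplex n a ->
  std_simplex n (\row_(i < n) a i) /\
  forall p, List.In p (List.seq 0 n) -> of_row (\row_(i < n) a i) p = a p.
Proof.
move=> [h1 h2]; split; last by move=> p /In_seq_ord [i ->]; rewrite of_row_ord mxE.
split.
  move=> i; rewrite mxE; apply/RleP/h1/List.in_seq; split=> /=; first exact: le_0_n.
  by apply/ssrnat.ltP.
transitivity (sumL (List.seq 0 n) a); last exact: h2.
by rewrite sumL_iota; apply: eq_bigr => i _; rewrite mxE.
Qed.

Lemma simplex_argmax n (F : (nat -> R) -> R) : (0 < n)%N ->
  (forall a b, (forall p, List.In p (List.seq 0 n) -> a p = b p) -> F a = F b) ->
  (forall v, std_simplex n v -> {for v, continuous (fun w => F (of_row w))}) ->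
  exists a, simplex n a /\ forall b, simplex n b -> Rle (F b) (F a).
Proof.
move=> n0 Fext Fcont.
have [v v_in vmax] : exists2 v, v \in std_simplex n &
    forall w, w \in std_simplex n -> F (of_row w) <= F (of_row v).
  apply: EVT_max_rV; [exact: std_simplex_neq0 | exact: std_simplex_compact |].
  by apply: continuous_in_subspaceT => v; rewrite in_setE; exact: Fcont.
rewrite in_setE in v_in.
exists (of_row v); split; first exact: simplex_of_row.
move=> b /simplex_to_row [w_in w_b].
rewrite -(Fext _ _ w_b); apply/RleP/vmax; rewrite in_setE; exact: w_in.
Qed.

Lemma continuous_weighted_sumL n (v : 'rV[R]_n) l (f : nat -> R) :
  {for v, continuous (fun w => sumL l (fun p => Rmult (of_row w p) (f p)))}.
Proof.
apply: continuous_sumL => p; apply: continuous_Rmult; first exact: continuous_of_row.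
exact: cst_continuous.
Qed.

Lemma jung_ratio_has_max (d n : nat) (c : nat -> Defs.point) (r : nat -> R) :
  Peano.lt 0 n ->
  (forall p, List.In p (List.seq 0 n) -> Rlt 0 (r p)) ->
  exists a, simplex n a /\
    forall b, simplex n b -> Rle (jung_ratio d n c r b) (jung_ratio d n c r a).
Proof.
move=> /ssrnat.ltP n0 r_pos; apply: simplex_argmax => //; first exact: jung_ratio_ext.
move=> v /simplex_of_row v_simplex.
have P0 := radial_mass_pos n r r_pos _ v_simplex.
rewrite /jung_ratio /Rdiv /inertia /Rminus /sqnorm /dot.
apply: continuous_Rmult; last first.
  by apply: continuous_Rinv; [exact: Rgt_not_eq | exact: continuous_weighted_sumL].
apply: continuous_Rplus; first exact: continuous_weighted_sumL.
by apply/continuous_Ropp/continuous_sumL => k; apply: continuous_Rmult;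
  exact: continuous_weighted_sumL.
Qed.

End SimplexMaximum.

Lemma support_balancing d n c a : simplex n a ->
  balancing d (fun p => vsub (c p) (barycenter n c a)) (positive_part (seq 0 n) a) a.
Proof.
  intros Ha. apply positive_part_balancing.
  - apply seq_NoDup.
  - exact (proj1 Ha).
  - rewrite (proj2 Ha). lra.
  - intros k _. apply barycenter_centered, Ha.
Qed.

Lemma maximal_jung_ratio_le d n c r a L :
  (1 <= d)%nat -> (forall p, In p (seq 0 n) -> 0 < r p) ->
  simplex n a -> (forall b, simplex n b -> jung_ratio d n c r b <= jung_ratio d n c r a) ->
  (forall p q, In p (seq 0 n) -> In q (seq 0 n) -> p <> q ->
    sqnorm d (vsub (c p) (c q)) <= L ^ 2 * (r p + r q) ^ 2) ->
  jung_ratio d n c r a <= L ^ 2 * (2 * INR d / (INR d + 1)).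
Proof.
  intros Hd r_pos Ha a_max Hpair.
  destruct (caratheodory _ _ _ _ (support_balancing d n c a Ha))
    as [l [w [Hincl [Hlen Hbal]]]].
  assert (Hl : forall p, In p l -> In p (seq 0 n) /\ 0 < a p)
    by (intros p Hp; apply In_positive_part, Hincl; exact Hp).
  apply (balanced_sphere_bound d _ l w r _ L Hd Hbal Hlen).
  - intros p Hp. apply r_pos, Hl, Hp.
  - intros p Hp. destruct (Hl p Hp) as [Hpn Hap].
    exact (maximizer_active d n c r r_pos a Ha a_max p Hpn Hap).
  - intros p q Hp Hq Hpq.
    rewrite (sqnorm_ext d _ (vsub (c p) (c q))) by (intros; unfold vsub; ring).
    apply Hpair; [apply Hl, Hp | apply Hl, Hq | exact Hpq].
Qed.

Theorem weighted_jung d n (c : nat -> point) (r : nat -> R) L :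
  (1 <= d)%nat -> (0 < n)%nat -> (forall p, In p (seq 0 n) -> 0 < r p) ->
  (forall p q, In p (seq 0 n) -> In q (seq 0 n) -> p <> q ->
    sqnorm d (vsub (c p) (c q)) <= L ^ 2 * (r p + r q) ^ 2) ->
  exists x, forall p, In p (seq 0 n) ->
    sqnorm d (vsub (c p) x) <= L ^ 2 * (2 * INR d / (INR d + 1)) * r p ^ 2.
Proof.
  intros Hd Hn r_pos Hpair.
  destruct (SimplexMaximum.jung_ratio_has_max d n c r Hn r_pos) as [a [Ha a_max]].
  exists (barycenter n c a). intros p Hp.
  eapply Rle_trans; [exact (maximizer_envelope d n c r r_pos a Ha a_max p Hp)|].
  apply Rmult_le_compat_r; [apply pow2_ge_0|].
  exact (maximal_jung_ratio_le d n c r a L Hd r_pos Ha a_max Hpair).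
Qed.

Lemma finite_enumeration m (sigma : nat -> Prop) : nonempty_subset m sigma ->
  exists n (e : nat -> nat), (0 < n)%nat /\ (forall p, In p (seq 0 n) -> sigma (e p)) /\
    forall i, sigma i -> exists p, In p (seq 0 n) /\ e p = i.
Proof.
  intros [Hsub [i0 Hi0]].
  set (L := filter (fun i => if excluded_middle_informative (sigma i) then true else false)
    (seq 0 m)).
  assert (HL : forall i, In i L <-> sigma i).
  { intros i. unfold L. rewrite filter_In, in_seq.
    destruct (excluded_middle_informative (sigma i)) as [Hs|Hs];
      split; try intros [H1 H2]; try congruence; auto.
    intros _. specialize (Hsub i Hs). split; [lia | reflexivity]. }
  exists (length L), (fun p => nth p L 0%nat). repeat split.
  - destruct L as [|i L']; [apply HL in Hi0; destruct Hi0 | simpl; lia].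
  - intros p Hp. apply in_seq in Hp. apply HL, nth_In. lia.
  - intros i Hi. apply HL in Hi. destruct (In_nth L i 0%nat Hi) as [p [Hp <-]].
    exists p. split; [apply in_seq; lia | reflexivity].
Qed.

Lemma sq_le_of_sqrt_mul_le K x y : 0 <= K -> 0 <= x -> sqrt K * x <= y ->
  x ^ 2 * K <= y ^ 2.
Proof.
  intros HK Hx Hxy. pose proof (sqrt_pos K). pose proof (sqrt_sqrt K HK).
  assert (0 <= sqrt K * x) by nra. nra.
Qed.

Lemma in_ball_of_sqnorm d c rho x : 0 <= rho -> sqnorm d (vsub c x) <= rho ^ 2 ->
  in_ball d c rho x.
Proof.
  intros Hrho H. unfold in_ball. rewrite edist_sqnorm, sqnorm_vsub_sym.
  rewrite <- (sqrt_pow2 rho) by exact Hrho. apply sqrt_le_1_alt, H.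
Qed.

Lemma Cech_VR d m c r lam sigma : Cech d m c r lam sigma -> VR d m c r lam sigma.
Proof. intros [Hne [x Hx]]. split; [exact Hne|]. intros i j Hi Hj. exists x. auto. Qed.

Lemma VR_Cech d m c r lam lam' sigma : disk_system m r -> 0 <= lam -> 0 <= lam' ->
  sqrt (2 * INR d / (INR d + 1)) * lam' <= lam ->
  VR d m c r lam' sigma -> Cech d m c r lam sigma.
Proof.
  intros Hdisk Hlam Hlam' Hscale [Hne Hpw]. split; [exact Hne|].
  assert (r_pos : forall i, sigma i -> 0 < r i) by (intros; apply Hdisk, (proj1 Hne); auto).
  destruct d as [|d'].
  { exists (fun _ => 0). intros i Hi. unfold in_ball, edist. simpl.
    rewrite sqrt_0. pose proof (r_pos i Hi). nra. }
  set (d := S d') in *.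
  assert (HK : 0 <= 2 * INR d / (INR d + 1)).
  { pose proof (pos_INR d). apply Rmult_le_pos; [lra|]. apply Rlt_le, Rinv_0_lt_compat. lra. }
  destruct (finite_enumeration m sigma Hne) as [n [e [Hn [He Hsurj]]]].
  destruct (weighted_jung d n (fun p => c (e p)) (fun p => r (e p)) lam' ltac:(unfold d; lia) Hn)
    as [x Hx].
  - intros p Hp. apply r_pos, He, Hp.
  - intros p q Hp Hq _. destruct (Hpw _ _ (He p Hp) (He q Hq)) as [y [Hy1 Hy2]].
    replace (lam' ^ 2 * (r (e p) + r (e q)) ^ 2)
      with ((lam' * r (e p) + lam' * r (e q)) ^ 2) by ring.
    exact (sqnorm_vsub_le_of_balls d y _ _ _ _ Hy1 Hy2).
  - exists x. intros i Hi. destruct (Hsurj i Hi) as [p [Hp <-]].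
    pose proof (r_pos _ Hi).
    apply in_ball_of_sqnorm; [nra|].
    eapply Rle_trans; [exact (Hx p Hp)|].
    pose proof (sq_le_of_sqrt_mul_le _ _ _ HK Hlam' Hscale). nra.
Qed.

Theorem mainTheorem4 (d m : nat) (c : nat -> point) (r : nat -> R)
  (lam lam' : R) :
  disk_system m r -> 0 <= lam -> 0 <= lam' ->
  sqrt (2 * INR d / (INR d + 1)) * lam' <= lam ->
  (forall sigma : nat -> Prop, VR d m c r lam' sigma -> Cech d m c r lam sigma) /\
  (forall sigma : nat -> Prop, Cech d m c r lam sigma -> VR d m c r lam sigma).
Proof.
  intros Hdisk Hlam Hlam' Hscale. split.
  - intros sigma. exact (VR_Cech d m c r lam lam' sigma Hdisk Hlam Hlam' Hscale).
  - intros sigma. apply Cech_VR.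
Qed.
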